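(* Let $P_0(k)=C_{p0}T_{p0}^k-C_mT_m^k$ with $C_{p0},C_m>0$ and $0<T_{p0}<T_m<1$, and let $C_{pi}>0$ and $0<T_{pi}<T_m$, $i=1,\dots,N$. Then there exist positive numbers $C_{m0},\dots,C_{mN}$ with $\sum_{i=0}^N C_{mi}=C_m$ such that the functions $L_i(k)=C_{pi}T_{pi}^k-C_{mi}T_m^k$, $i=0,\dots,N$, all attain their minimum at one common point $k_1$ (i.e. $L_i'(k_1)=0$ for all $i$), and $P_0(k)+\sum_{i=1}^N C_{pi}T_{pi}^k=\sum_{i=0}^N L_i(k)$ for all real $k$. *)

(* concrete reals R; T^k for T>0 is Rpower T k = exp (k * ln T). *)
From Stdlib Require Export Reals.
Open Scope R_scope.

Fixpoint sum_from1 (f : nat -> R) (N : nat) : R :=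
  match N with
  | O => 0
  | S n => sum_from1 f n + f (S n)
  end.

Definition P0 (Cp0 Tp0 Cm Tm : R) (k : R) : R :=
  Cp0 * Rpower Tp0 k - Cm * Rpower Tm k.

Definition Lfun (Cpi Tpi Cmi Tm : R) (k : R) : R :=
  Cpi * Rpower Tpi k - Cmi * Rpower Tm k.

(* Choosing [C_mi] so that [L_i'(k1) = 0] forces
   [C_mi = C_pi (ln T_pi / ln T_m) (T_pi / T_m)^k1], which is positive, and with this
   choice [L_i'] changes sign from negative to positive at [k1], so [k1] is a global
   minimum of [L_i].  It remains to pick one [k1] for which these coefficients add up
   to [C_m]: their sum is continuous in [k1], exceeds [C_m] for [k1] very negative
   (already the [i = 0] term does) and tends to [0] as [k1 -> +oo], since every ratio
   [T_pi / T_m] lies in [(0, 1)]; the intermediate value theorem provides [k1]. *)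

From Stdlib Require Import Reals Lra Lia.
Open Scope R_scope.

Lemma derivable_pt_lim_Rpower_exponent (T x : R) :
  derivable_pt_lim (Rpower T) x (ln T * Rpower T x).
Proof.
  assert (Hlin : derivable_pt_lim (fun k => id k * ln T) x (1 * ln T))
    by exact (derivable_pt_lim_scal_right _ _ _ _ (derivable_pt_lim_id x)).
  rewrite Rmult_1_l in Hlin.
  rewrite Rmult_comm. unfold Rpower.
  exact (derivable_pt_lim_comp _ exp _ _ _ Hlin (derivable_pt_lim_exp _)).
Qed.

Lemma Lfun_derivative (Cp Tp Cmi Tm x : R) :
  derivable_pt_lim (Lfun Cp Tp Cmi Tm) x
    (Cp * (ln Tp * Rpower Tp x) - Cmi * (ln Tm * Rpower Tm x)).
Proof.
  apply (derivable_pt_lim_minus (mult_real_fct Cp (Rpower Tp))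
           (mult_real_fct Cmi (Rpower Tm)));
    apply derivable_pt_lim_scal, derivable_pt_lim_Rpower_exponent.
Qed.

Lemma continuity_scal_Rpower (c T : R) : continuity (fun k => c * Rpower T k).
Proof.
  intro x. apply derivable_continuous_pt.
  exists (c * (ln T * Rpower T x)).
  exact (derivable_pt_lim_scal (Rpower T) _ _ _ (derivable_pt_lim_Rpower_exponent T x)).
Qed.

Lemma ln_lt_0 (r : R) : 0 < r < 1 -> ln r < 0.
Proof. intro Hr. rewrite <- ln_1. apply ln_increasing; lra. Qed.

Lemma Rpower_decreasing (r x y : R) : 0 < r < 1 -> x < y -> Rpower r y < Rpower r x.
Proof. intros Hr Hxy. apply ln_lt_0 in Hr. apply exp_increasing. nra. Qed.

Lemma Rpower_scal_eventually_lt (c r eps : R) :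
  0 < c -> 0 < r < 1 -> 0 < eps ->
  exists K, forall k, K <= k -> c * Rpower r k < eps.
Proof.
  intros Hc Hr Heps. pose proof (ln_lt_0 r Hr) as Hlr.
  exists (ln (eps / c) / ln r + 1). intros k Hk.
  assert (Hexp : k * ln r < ln (eps / c)).
  { replace (ln (eps / c)) with ((ln (eps / c) / ln r + 1) * ln r - ln r)
      by (field; lra).
    nra. }
  assert (Hbound : Rpower r k < eps / c).
  { rewrite <- (exp_ln (eps / c)) by (apply Rdiv_lt_0_compat; lra).
    apply exp_increasing. exact Hexp. }
  replace eps with (c * (eps / c)) by (field; lra).
  apply Rmult_lt_compat_l; assumption.
Qed.

Lemma Rpower_scal_exceeds (c r M : R) :
  0 < c -> 0 < r < 1 -> 0 < M -> exists a, M < c * Rpower r a.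
Proof.
  intros Hc Hr HM. pose proof (ln_lt_0 r Hr) as Hlr.
  exists (ln (M / c) / ln r - 1).
  assert (Hexp : ln (M / c) < (ln (M / c) / ln r - 1) * ln r).
  { replace ((ln (M / c) / ln r - 1) * ln r) with (ln (M / c) - ln r)
      by (field; lra).
    lra. }
  assert (Hbound : M / c < Rpower r (ln (M / c) / ln r - 1)).
  { rewrite <- (exp_ln (M / c)) at 1 by (apply Rdiv_lt_0_compat; lra).
    apply exp_increasing. exact Hexp. }
  replace M with (c * (M / c)) at 1 by (field; lra).
  apply Rmult_lt_compat_l; assumption.
Qed.

Lemma min_of_derivative_sign (f f' : R -> R) (a : R) :
  (forall x, derivable_pt_lim f x (f' x)) ->
  (forall x, x < a -> f' x <= 0) -> (forall x, a < x -> 0 <= f' x) ->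
  forall x, f a <= f x.
Proof.
  intros Hf Hneg Hpos x.
  destruct (Rtotal_order x a) as [Hxa | [-> | Hax]].
  - destruct (MVT_cor2 f f' x a Hxa (fun c _ => Hf c)) as [c [Hc Hac]].
    pose proof (Hneg c (proj2 Hac)). nra.
  - lra.
  - destruct (MVT_cor2 f f' a x Hax (fun c _ => Hf c)) as [c [Hc Hac]].
    pose proof (Hpos c (proj1 Hac)). nra.
Qed.

Lemma continuity_sum_f_R0 (f : nat -> R -> R) (n : nat) :
  (forall i, continuity (f i)) -> continuity (fun k => sum_f_R0 (fun i => f i k) n).
Proof.
  intro Hf. induction n as [|n IH]; simpl.
  - apply Hf.
  - exact (continuity_plus _ (f (S n)) IH (Hf (S n))).
Qed.

Lemma sum_f_R0_eventually_lt (f : nat -> R -> R) (n : nat) :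
  (forall i eps, (i <= n)%nat -> 0 < eps ->
     exists K, forall k, K <= k -> f i k < eps) ->
  forall eps, 0 < eps ->
  exists K, forall k, K <= k -> sum_f_R0 (fun i => f i k) n < eps.
Proof.
  induction n as [|n IH]; intros Hf eps Heps; simpl.
  - apply Hf; [lia | exact Heps].
  - destruct (IH (fun i e Hi => Hf i e ltac:(lia)) (eps / 2) ltac:(lra)) as [K1 HK1].
    destruct (Hf (S n) (eps / 2) (le_n _) ltac:(lra)) as [K2 HK2].
    exists (Rmax K1 K2). intros k Hk.
    pose proof (HK1 k (Rle_trans _ _ _ (Rmax_l K1 K2) Hk)).
    pose proof (HK2 k (Rle_trans _ _ _ (Rmax_r K1 K2) Hk)).
    lra.
Qed.

Lemma sum_f_R0_ge_first (f : nat -> R) (n : nat) :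
  (forall i, (i <= n)%nat -> 0 <= f i) -> f 0%nat <= sum_f_R0 f n.
Proof.
  induction n as [|n IH]; intro Hf; simpl; [lra|].
  pose proof (IH (fun i Hi => Hf i ltac:(lia))). pose proof (Hf (S n) (le_n _)). lra.
Qed.

Lemma sum_f_R0_from1 (f : nat -> R) (N : nat) :
  sum_f_R0 f N = f 0%nat + sum_from1 f N.
Proof. induction N as [|N IH]; simpl; [ring | rewrite IH; ring]. Qed.

Lemma IVT_eventually_below (g : R -> R) (c a : R) :
  continuity g -> c < g a -> (exists K, forall k, K <= k -> g k < c) ->
  exists k, g k = c.
Proof.
  intros Hg Hga [K HK].
  set (b := Rmax K (a + 1)).
  assert (Hgb : g b < c) by (apply HK, Rmax_l).
  assert (Hab : a < b) by (pose proof (Rmax_r K (a + 1)); unfold b; lra).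
  assert (Hcont : continuity (fun k => c - g k)).
  { intro x. apply (continuity_pt_minus (fct_cte c) g).
    - apply continuity_pt_const. intros ? ?. reflexivity.
    - apply Hg. }
  destruct (IVT (fun k => c - g k) a b Hcont Hab ltac:(lra) ltac:(lra)) as [k [_ Hk]].
  exists k. lra.
Qed.

(* The unique [C_mi] making [k] a critical point of [L_i], from
   [C_pi ln T_pi T_pi^k = C_mi ln T_m T_m^k]. *)
Definition crit_coef (Cp Tp Tm k : R) : R :=
  Cp * (ln Tp / ln Tm) * Rpower (Tp / Tm) k.

Section CriticalCoefficient.

Variables Cp Tp Tm : R.
Hypotheses (HCp : 0 < Cp) (HTp : 0 < Tp) (HTpm : Tp < Tm) (HTm1 : Tm < 1).

Let ratio_in_unit : 0 < Tp / Tm < 1.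
Proof.
  split; [apply Rdiv_lt_0_compat; lra|].
  apply (Rmult_lt_reg_r Tm); [lra|]. field_simplify; lra.
Qed.

Let ln_Tp_lt_ln_Tm : ln Tp < ln Tm.
Proof. apply ln_increasing; lra. Qed.

Let ln_Tm_lt_0 : ln Tm < 0.
Proof. apply ln_lt_0; lra. Qed.

Let crit_scale_pos : 0 < Cp * (ln Tp / ln Tm).
Proof.
  apply Rmult_lt_0_compat; [exact HCp|].
  replace (ln Tp / ln Tm) with (- ln Tp / - ln Tm) by (field; lra).
  apply Rdiv_lt_0_compat; lra.
Qed.

Lemma crit_coef_pos (k : R) : 0 < crit_coef Cp Tp Tm k.
Proof. apply Rmult_lt_0_compat; [exact crit_scale_pos | apply exp_pos]. Qed.

Lemma Lfun_crit_coef_derivative_factor (k1 x : R) :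
  Cp * (ln Tp * Rpower Tp x) - crit_coef Cp Tp Tm k1 * (ln Tm * Rpower Tm x)
  = Cp * ln Tp * Rpower Tm x * (Rpower (Tp / Tm) x - Rpower (Tp / Tm) k1).
Proof.
  assert (Hsplit : Rpower Tp x = Rpower Tm x * Rpower (Tp / Tm) x).
  { rewrite Rpower_mult_distr by lra. f_equal. field. lra. }
  rewrite Hsplit. unfold crit_coef. field. lra.
Qed.

Lemma Lfun_crit_coef_critical (k1 : R) :
  derivable_pt_lim (Lfun Cp Tp (crit_coef Cp Tp Tm k1) Tm) k1 0.
Proof.
  pose proof (Lfun_derivative Cp Tp (crit_coef Cp Tp Tm k1) Tm k1) as HD.
  rewrite Lfun_crit_coef_derivative_factor, Rminus_diag, Rmult_0_r in HD.
  exact HD.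
Qed.

Lemma Lfun_crit_coef_min (k1 k : R) :
  Lfun Cp Tp (crit_coef Cp Tp Tm k1) Tm k1 <= Lfun Cp Tp (crit_coef Cp Tp Tm k1) Tm k.
Proof.
  assert (Hneg : forall x, Cp * ln Tp * Rpower Tm x < 0).
  { intro x. assert (Cp * ln Tp < 0) by nra.
    pose proof (exp_pos (x * ln Tm)). unfold Rpower. nra. }
  apply (min_of_derivative_sign _ _ k1 (Lfun_derivative Cp Tp _ Tm)); intros x Hx;
    rewrite Lfun_crit_coef_derivative_factor;
    pose proof (Hneg x); pose proof (Rpower_decreasing _ _ _ ratio_in_unit Hx); nra.
Qed.

Lemma crit_coef_eventually_lt (eps : R) :
  0 < eps -> exists K, forall k, K <= k -> crit_coef Cp Tp Tm k < eps.
Proof. exact (Rpower_scal_eventually_lt _ _ eps crit_scale_pos ratio_in_unit). Qed.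

Lemma crit_coef_exceeds (M : R) : 0 < M -> exists a, M < crit_coef Cp Tp Tm a.
Proof. exact (Rpower_scal_exceeds _ _ M crit_scale_pos ratio_in_unit). Qed.

End CriticalCoefficient.

Lemma crit_coef_sum_attains (N : nat) (Cp Tp : nat -> R) (Cm Tm : R) :
  0 < Cm -> Tm < 1 ->
  (forall i, (i <= N)%nat -> 0 < Cp i /\ 0 < Tp i /\ Tp i < Tm) ->
  exists k1, sum_f_R0 (fun i => crit_coef (Cp i) (Tp i) Tm k1) N = Cm.
Proof.
  intros HCm HTm1 Hall.
  destruct (Hall 0%nat (Nat.le_0_l N)) as (HC0 & HT0 & HT0m).
  destruct (crit_coef_exceeds _ _ _ HC0 HT0 HT0m HTm1 Cm HCm) as [a Ha].
  apply (IVT_eventually_below _ Cm a).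
  - apply continuity_sum_f_R0. intro i. apply continuity_scal_Rpower.
  - eapply Rlt_le_trans; [exact Ha|].
    apply (sum_f_R0_ge_first (fun i => crit_coef (Cp i) (Tp i) Tm a)).
    intros i Hi. destruct (Hall i Hi) as (? & ? & ?).
    apply Rlt_le, crit_coef_pos; assumption.
  - apply (sum_f_R0_eventually_lt (fun i => crit_coef (Cp i) (Tp i) Tm)); [|exact HCm].
    intros i eps Hi. destruct (Hall i Hi) as (? & ? & ?).
    apply crit_coef_eventually_lt; assumption.
Qed.

Lemma P0_add_sum_from1_eq_sum_Lfun (N : nat) (Cp Tp Cmi : nat -> R) (Cm Tm k : R) :
  sum_f_R0 Cmi N = Cm ->
  P0 (Cp 0%nat) (Tp 0%nat) Cm Tm k + sum_from1 (fun i => Cp i * Rpower (Tp i) k) N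
  = sum_f_R0 (fun i => Lfun (Cp i) (Tp i) (Cmi i) Tm k) N.
Proof.
  intro Hsum. unfold Lfun.
  rewrite minus_sum, <- scal_sum, (sum_f_R0_from1 (fun i => Cp i * Rpower (Tp i) k)).
  rewrite Hsum. unfold P0. ring.
Qed.

Theorem corollary2 (N : nat) (Cp Tp : nat -> R) (Cm Tm : R) :
  0 < Cp 0%nat -> 0 < Cm -> 0 < Tp 0%nat -> Tp 0%nat < Tm -> Tm < 1 ->
  (forall i : nat, (1 <= i <= N)%nat -> 0 < Cp i /\ 0 < Tp i /\ Tp i < Tm) ->
  exists Cmi : nat -> R,
    (forall i : nat, (i <= N)%nat -> 0 < Cmi i) /\
    sum_f_R0 Cmi N = Cm /\
    (exists k1 : R,
       forall i : nat, (i <= N)%nat ->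
         derivable_pt_lim (Lfun (Cp i) (Tp i) (Cmi i) Tm) k1 0 /\
         (forall k : R, Lfun (Cp i) (Tp i) (Cmi i) Tm k1
                        <= Lfun (Cp i) (Tp i) (Cmi i) Tm k)) /\
    (forall k : R,
       P0 (Cp 0%nat) (Tp 0%nat) Cm Tm k
         + sum_from1 (fun i => Cp i * Rpower (Tp i) k) N
       = sum_f_R0 (fun i => Lfun (Cp i) (Tp i) (Cmi i) Tm k) N).
Proof.
  intros HC0 HCm HT0 HT0m HTm1 Hi.
  assert (Hall : forall i, (i <= N)%nat -> 0 < Cp i /\ 0 < Tp i /\ Tp i < Tm).
  { intros [|i] Hle; [auto | apply Hi; lia]. }
  destruct (crit_coef_sum_attains N Cp Tp Cm Tm HCm HTm1 Hall) as [k1 Hsum].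
  exists (fun i => crit_coef (Cp i) (Tp i) Tm k1).
  split; [|split; [exact Hsum | split]].
  - intros i Hle. destruct (Hall i Hle) as (? & ? & ?). apply crit_coef_pos; assumption.
  - exists k1. intros i Hle. destruct (Hall i Hle) as (? & ? & ?).
    split; [apply Lfun_crit_coef_critical | apply Lfun_crit_coef_min]; assumption.
  - intro k. exact (P0_add_sum_from1_eq_sum_Lfun N Cp Tp _ Cm Tm k Hsum).
Qed.
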